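(* Let $0<\beta'<\beta<1$. Then $\mathcal{R}_{\mathcal{X}}(\beta')$ satisfies the $\beta$-aggregation condition; in particular, for all $x\in\mathcal{X}$ and all $z'<F_x^{-1}(\beta)$, $$\mathbb{P}\big(Y\in\{y: z'\le f(x,y)\le F_x^{-1}(\beta)\}\cap\mathcal{R}_{\mathcal{X}}(\beta')\big)>0.$$
   Context: Let $(\Omega,\mathcal{F},\mathbb{P})$ be a probability space, $Y$ a random vector in $\mathbb{R}^d$, $\mathcal{X}\subseteq\mathbb{R}^k$ a set of decisions and $f:\mathcal{X}\times\mathbb{R}^d\to\mathbb{R}$ a loss function with $f(x,Y)$ measurable for all $x$. Write $F_x(z)=\mathbb{P}(f(x,Y)\le z)$ and $F_x^{-1}(\gamma)=\inf\{z: F_x(z)\ge\gamma\}$. For $0<\gamma<1$ the $\gamma$-risk region of $x$ is $\mathcal{R}_x(\gamma)=\{y\in\mathbb{R}^d: f(x,y)\ge F_x^{-1}(\gamma)\}$ and $\mathcal{R}_{\mathcal{X}}(\gamma)=\bigcup_{x\in\mathcal{X}}\mathcal{R}_x(\gamma)$. A set $\mathcal{R}$ with $\mathcal{R}_{\mathcal{X}}(\beta)\subseteq\mathcal{R}\subset\mathbb{R}^d$ satisfies the $\beta$-aggregation condition if for all $x\in\mathcal{X}$ and all $z'<F_x^{-1}(\beta)$, $\mathbb{P}\big(Y\in\{y: z'<f(x,y)\le F_x^{-1}(\beta)\}\cap\mathcal{R}\big)>0$. *)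

From HB Require Import structures.
From mathcomp Require Import all_boot all_order all_algebra.
From mathcomp Require Import all_classical all_reals all_analysis.
Set Implicit Arguments. Unset Strict Implicit. Unset Printing Implicit Defensive.
Import Order.TTheory GRing.Theory Num.Theory.
Local Open Scope classical_set_scope.
Local Open Scope ring_scope.

Definition cdf (R : realType) (d : measure_display) (T : measurableType d)
  (P : probability T R) (g : T -> R) (z : R) : \bar R :=
  P [set w | g w <= z].

Definition quantile (R : realType) (d : measure_display) (T : measurableType d)
  (P : probability T R) (g : T -> R) (gamma : R) : R :=
  inf [set z : R | (gamma%:E <= cdf P g z)%E].

Definition risk_region (R : realType) (d : measure_display) (T : measurableType d)
  (P : probability T R) (k n : nat) (Y : T -> 'rV[R]_n)
  (f : 'rV[R]_k -> 'rV[R]_n -> R) (x : 'rV[R]_k) (gamma : R) : set 'rV[R]_n :=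
  [set y | quantile P (fun w => f x (Y w)) gamma <= f x y].

Definition risk_region_set (R : realType) (d : measure_display) (T : measurableType d)
  (P : probability T R) (k n : nat) (Y : T -> 'rV[R]_n)
  (f : 'rV[R]_k -> 'rV[R]_n -> R) (X : set 'rV[R]_k) (gamma : R) : set 'rV[R]_n :=
  \bigcup_(x in X) risk_region P Y f x gamma.

(* "P(E) > 0" for an event E that need not be known to be measurable:
   E contains a measurable event of positive probability (positive inner
   probability; coincides with P(E) > 0 when E is measurable). *)
Definition pos_prob (R : realType) (d : measure_display) (T : measurableType d)
  (P : probability T R) (E : set T) : Prop :=
  exists A : set T, [/\ measurable A, A `<=` E & (0 < P A)%E].

Definition aggregation_condition (R : realType) (d : measure_display)
  (T : measurableType d) (P : probability T R) (k n : nat) (Y : T -> 'rV[R]_n)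
  (f : 'rV[R]_k -> 'rV[R]_n -> R) (X : set 'rV[R]_k) (beta : R)
  (Rset : set 'rV[R]_n) : Prop :=
  risk_region_set P Y f X beta `<=` Rset /\
  forall x, X x -> forall z' : R,
    z' < quantile P (fun w => f x (Y w)) beta ->
    pos_prob P (Y @^-1` ([set y | z' < f x y <= quantile P (fun w => f x (Y w)) beta]
                          `&` Rset)).

From Pilot Require Import Defs.
From HB Require Import structures.
From mathcomp Require Import all_boot all_order all_algebra.
From mathcomp Require Import all_classical all_reals all_analysis.
From mathcomp Require Import measurable_realfun.
Import Order.TTheory GRing.Theory Num.Theory.
Local Open Scope classical_set_scope.
Local Open Scope ring_scope.

(* The quantile q = F^{-1}(b) of g = f(x, Y) satisfies F(q) >= b by right
   continuity of F, F(z') < b for every z' < q, and, for q' = F^{-1}(b'),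
   P(g < q') <= b' < b by left limits.  Hence the events {g <= z'} and
   {g < q'} together have probability < b <= P(g <= q) (when q' <= z' their
   union is {g <= z'}, otherwise it is {g < q'}), so the band
   {z' < g <= q, q' <= g} has positive probability; every point of it lies in
   R_x(b') and thus in R_X(b').  Monotonicity of quantiles in the level gives
   R_X(b) included in R_X(b'). *)

Section measurable_comparison.
Context (d : measure_display) (T : measurableType d) (R : realType)
  (f h : T -> R) (mf : measurable_fun setT f) (mh : measurable_fun setT h).

Lemma measurable_set_ler : measurable [set w | f w <= h w].
Proof. by rewrite -[X in measurable X]setTI; exact: measurable_fun_ler. Qed.

Lemma measurable_set_ltr : measurable [set w | f w < h w].
Proof. by rewrite -[X in measurable X]setTI; exact: measurable_fun_ltr. Qed.

End measurable_comparison.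

Section quantile.
Context {R : realType} {d : measure_display} {T : measurableType d}
  (P : probability T R) {g : T -> R} (mg : measurable_fun setT g).

(* [g] as a random variable, so that the library's [cdf] lemmas apply. *)
Let X : {RV P >-> R} := mfun_Sub (mem_set mg).

Let cdfE z : Defs.cdf P g z = cdf X z.
Proof. by []. Qed.

Let measurable_le z : measurable [set w | g w <= z].
Proof. exact: measurable_set_ler. Qed.

Let measurable_lt z : measurable [set w | g w < z].
Proof. exact: measurable_set_ltr. Qed.

Let measurable_ge z : measurable [set w | z <= g w].
Proof. exact: measurable_set_ler. Qed.

Let measurable_gt z : measurable [set w | z < g w].
Proof. exact: measurable_set_ltr. Qed.

#[local] Hint Resolve measurable_le measurable_lt measurable_ge measurable_gt : core.

Lemma le_cdf z1 z2 : z1 <= z2 -> (Defs.cdf P g z1 <= Defs.cdf P g z2)%E.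
Proof. by rewrite !cdfE; exact: cdf_nondecreasing. Qed.

Lemma exists_cdf_gt c : c < 1 -> exists z, (c%:E < Defs.cdf P g z)%E.
Proof.
move=> c1; have [z cz] : exists z, c < fine (cdf X z).
  exact: filter_ex (cvgr_gt _ (fine_cvg (cvg_cdfy1 X)) _ c1).
by exists z; rewrite cdfE -[cdf X z]fineK ?lte_fin ?fin_num_measure.
Qed.

Lemma exists_cdf_lt c : 0 < c -> exists z, (Defs.cdf P g z < c%:E)%E.
Proof.
move=> c0; have [z zc] : exists z, fine (cdf X z) < c.
  exact: filter_ex (cvgr_lt _ (fine_cvg (cvg_cdfNy0 X)) _ c0).
by exists z; rewrite cdfE -[cdf X z]fineK ?lte_fin ?fin_num_measure.
Qed.

Lemma cdf_ge_from_right a b :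
  (forall e, 0 < e -> (b%:E <= Defs.cdf P g (a + e))%E) ->
  (b%:E <= Defs.cdf P g a)%E.
Proof.
move=> le_b; apply: cvge_to_ge (@cdf_right_continuous _ _ _ _ X a) _.
near=> x; rewrite -cdfE -(subrKC a x); apply: le_b; rewrite subr_gt0.
by near: x; exact: nbhs_right_gt.
Unshelve. all: by end_near. Qed.

Lemma prob_lt_le_from_left a b :
  (forall e, 0 < e -> (Defs.cdf P g (a - e) <= b%:E)%E) ->
  (P [set w | (g w < a)%R] <= b%:E)%E.
Proof.
move=> ge_b; pose F n := [set w | g w <= a - n.+1%:R^-1].
have FE : \bigcup_n F n = [set w | g w < a].
  apply/seteqP; split => [w [n _ Fnw]|w gwa]; rewrite /F /=.
    by apply: le_lt_trans Fnw _; rewrite ltrBlDr ltrDl invr_gt0.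
  have gwa0 : 0 < a - g w by rewrite subr_gt0.
  have [n n_lt] := filter_ex (near_infty_natSinv_lt (PosNum gwa0)).
  by exists n => //=; rewrite lerBrDl -lerBrDr ltW.
have : (P \o F) @ \oo --> P [set w | g w < a].
  rewrite -FE; apply: nondecreasing_cvg_mu.
  - by move=> n; exact: measurable_le.
  - by apply: bigcup_measurable => n _; exact: measurable_le.
  - move=> m n mn; apply/subsetPset => w /= /le_trans; apply.
    by rewrite lerD2l lerN2 lef_pV2 ?posrE// ler_nat.
move/cvge_to_le; apply; apply: nearW => n /=.
by apply: ge_b; rewrite invr_gt0.
Qed.

Let has_inf_cdf_ge gam : 0 < gam -> gam < 1 ->
  has_inf [set z | (gam%:E <= Defs.cdf P g z)%E].
Proof.
move=> gam0 gam1; split.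
  by have [z /ltW] := exists_cdf_gt _ gam1; exists z.
have [z zgam] := exists_cdf_lt _ gam0; exists z => s gams.
rewrite leNgt; apply/negP => /ltW /(le_cdf _ _)/(le_trans gams).
by rewrite leNgt zgam.
Qed.

Lemma cdf_lt_quantile gam z : 0 < gam -> gam < 1 ->
  z < quantile P g gam -> (Defs.cdf P g z < gam%:E)%E.
Proof.
move=> gam0 gam1 zq; rewrite ltNge; apply/negP => gamz.
by have := ge_inf (has_inf_cdf_ge _ gam0 gam1).2 gamz; rewrite leNgt zq.
Qed.

Lemma cdf_quantile_ge gam : 0 < gam -> gam < 1 ->
  (gam%:E <= Defs.cdf P g (quantile P g gam))%E.
Proof.
move=> gam0 gam1; apply: cdf_ge_from_right => e e0.
have [s gams sq] := inf_adherent e0 (has_inf_cdf_ge _ gam0 gam1).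
exact: le_trans gams (le_cdf _ _ (ltW sq)).
Qed.

Lemma prob_lt_quantile_le gam : 0 < gam -> gam < 1 ->
  (P [set w | (g w < quantile P g gam)%R] <= gam%:E)%E.
Proof.
move=> gam0 gam1; apply: prob_lt_le_from_left => e e0.
by apply/ltW/cdf_lt_quantile => //; rewrite ltrBlDr ltrDl.
Qed.

Lemma le_quantile gam' gam : 0 < gam' -> gam' <= gam -> gam < 1 ->
  quantile P g gam' <= quantile P g gam.
Proof.
move=> gam'0 gam'gam gam1; have gam0 := lt_le_trans gam'0 gam'gam.
apply: lb_le_inf; first exact: (has_inf_cdf_ge _ gam0 gam1).1.
move=> s gams; apply: (ge_inf (has_inf_cdf_ge _ gam'0 (le_lt_trans gam'gam gam1)).2).
by apply: le_trans gams; rewrite lee_fin.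
Qed.

Lemma prob_below_quantile_band_lt b' b z' : 0 < b' -> b' < b -> b < 1 ->
  z' < quantile P g b ->
  (P ([set w | (g w <= z')%R] `|` [set w | (g w < quantile P g b')%R])
    < b%:E)%E.
Proof.
move=> b'0 b'b b1 zq; have b0 := lt_trans b'0 b'b.
have mC : measurable ([set w | g w <= z'] `|` [set w | g w < quantile P g b'])
  by exact: measurableU.
have [q'z|z'q'] := leP (quantile P g b') z'.
  apply: le_lt_trans (cdf_lt_quantile _ _ b0 b1 zq).
  apply: le_measure; rewrite ?inE //.
  by move=> w [] //= /lt_le_trans/(_ q'z)/ltW.
apply: le_lt_trans (_ : (b'%:E < b%:E)%E); last by rewrite lte_fin.
apply: le_trans (prob_lt_quantile_le _ b'0 (lt_trans b'b b1)).
apply: le_measure; rewrite ?inE //.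
by move=> w [] //= /le_lt_trans/(_ z'q').
Qed.

Lemma pos_prob_quantile_band b' b z' : 0 < b' -> b' < b -> b < 1 ->
  z' < quantile P g b ->
  pos_prob P ([set w | z' < g w] `&` [set w | g w <= quantile P g b]
              `&` [set w | quantile P g b' <= g w]).
Proof.
move=> b'0 b'b b1 zq; have b0 := lt_trans b'0 b'b.
set A := _ `&` _ `&` _.
set C := [set w | g w <= z'] `|` [set w | g w < quantile P g b'].
have mA : measurable A by apply: measurableI; first exact: measurableI.
have mC : measurable C by exact: measurableU.
have sub : [set w | g w <= quantile P g b] `<=` A `|` C.
  move=> w /= wq; have [wz|z'w] := leP (g w) z'; first by right; left.
  have [wq'|q'w] := ltP (g w) (quantile P g b'); first by right; right.
  by left.
have PAC : (b%:E <= P A + P C)%E.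
  apply: le_trans (cdf_quantile_ge _ b0 b1) _.
  apply: le_trans (measureU2 _ mA mC).
  by apply: le_measure; rewrite ?inE //; exact: measurableU.
have PC : (P C < b%:E)%E by exact: prob_below_quantile_band_lt.
exists A; split => //; rewrite lt_neqAle measure_ge0 andbT; apply/eqP => PA0.
by move: PAC; rewrite -PA0 add0e leNgt PC.
Qed.

End quantile.

Lemma pos_prob_subset {R : realType} {d : measure_display} {T : measurableType d}
  {P : probability T R} {E E' : set T} :
  pos_prob P E -> E `<=` E' -> pos_prob P E'.
Proof.
by move=> [A [mA AE PA]] EE'; exists A; split => //; exact: subset_trans EE'.
Qed.

Section risk_regions.
Context {R : realType} {d : measure_display} {T : measurableType d}
  (P : probability T R) {k n : nat} {Y : T -> 'rV[R]_n}
  {f : 'rV[R]_k -> 'rV[R]_n -> R} {X : set 'rV[R]_k}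
  (hf : forall x : 'rV[R]_k, measurable_fun setT (fun w => f x (Y w))).

Lemma risk_region_set_subset gam' gam : 0 < gam' -> gam' <= gam -> gam < 1 ->
  risk_region_set P Y f X gam `<=` risk_region_set P Y f X gam'.
Proof.
move=> gam'0 gam'gam gam1 y [x Xx xy]; exists x => //.
by apply: le_trans xy; exact: le_quantile.
Qed.

Lemma pos_prob_risk_band beta' beta :
  0 < beta' -> beta' < beta -> beta < 1 ->
  forall x, X x -> forall z', z' < quantile P (fun w => f x (Y w)) beta ->
  pos_prob P (Y @^-1` ([set y | z' < f x y <= quantile P (fun w => f x (Y w)) beta]
                       `&` risk_region_set P Y f X beta')).
Proof.
move=> b'0 b'b b1 x Xx z' zq.
apply: pos_prob_subset (pos_prob_quantile_band P (hf x) beta' beta z' b'0 b'b b1 zq) _.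
move=> w [[/= z'w wq] q'w]; split; first by rewrite /= z'w.
by exists x.
Qed.

End risk_regions.

Theorem mainTheorem2 (R : realType) (d : measure_display) (T : measurableType d)
  (P : probability T R) (k n : nat) (Y : T -> 'rV[R]_n)
  (f : 'rV[R]_k -> 'rV[R]_n -> R) (X : set 'rV[R]_k)
  (hf : forall x : 'rV[R]_k, measurable_fun setT (fun w => f x (Y w)))
  (beta' beta : R) (h0 : 0 < beta') (h1 : beta' < beta) (h2 : beta < 1) :
  aggregation_condition P Y f X beta (risk_region_set P Y f X beta') /\
  (forall x, X x -> forall z' : R,
    z' < quantile P (fun w => f x (Y w)) beta ->
    pos_prob P (Y @^-1` ([set y | z' <= f x y <= quantile P (fun w => f x (Y w)) beta]
                          `&` risk_region_set P Y f X beta'))).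
Proof.
have band := pos_prob_risk_band P (X:=X) hf beta' beta h0 h1 h2.
split; first split.
- exact: (risk_region_set_subset P (X:=X) hf beta' beta h0 (ltW h1) h2).
- exact: band.
move=> x Xx z' /(band x Xx) /pos_prob_subset; apply.
by move=> w [/= /andP[z'w wq] Rw]; split; first by rewrite /= (ltW z'w).
Qed.
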